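(* Let $G$ and $H$ be finite simple connected graphs of order at least $3$. If the direct product $G \times H$ is well-dominated, then $\gamma(G \times H)=\gamma(G)\,n(H)=\gamma(H)\,n(G)$. Furthermore, $\gamma(G)=\alpha(G)$ and $\gamma(H)=\alpha(H)$.
   Context: $n(X)$ is the order of $X$; $\gamma(X)$ is the domination number (minimum size of a dominating set) and $\alpha(X)$ is the independence number (maximum size of an independent set). A graph is well-dominated if every minimal dominating set is a minimum dominating set. The direct product $G\times H$ has vertex set $V(G)\times V(H)$, with $(g_1,h_1)$ adjacent to $(g_2,h_2)$ iff $g_1g_2\in E(G)$ and $h_1h_2\in E(H)$. *)

From mathcomp Require Import all_boot.
Set Implicit Arguments. Unset Strict Implicit. Unset Printing Implicit Defensive.

Definition simple_graph (T : finType) (e : rel T) : Prop :=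
  symmetric e /\ irreflexive e.

Definition connected_graph (T : finType) (e : rel T) : Prop :=
  forall x y : T, connect e x y.

Definition dominating (T : finType) (e : rel T) (D : {set T}) : bool :=
  [forall v, (v \in D) || [exists u in D, e v u]].

Definition minimal_dominating (T : finType) (e : rel T) (D : {set T}) : bool :=
  minset (dominating e) D.

Definition gamma (T : finType) (e : rel T) : nat :=
  \big[minn/#|T|]_(D : {set T} | dominating e D) #|D|.
(* the default #|T| is harmless: [set: T] is always dominating *)

Definition independent (T : finType) (e : rel T) (S : {set T}) : bool :=
  [forall u in S, forall v in S, ~~ e u v].

Definition alpha (T : finType) (e : rel T) : nat :=
  \max_(S : {set T} | independent e S) #|S|.

Definition well_dominated (T : finType) (e : rel T) : Prop :=
  forall D : {set T}, minimal_dominating e D -> #|D| = gamma e.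

Definition direct_prod (T1 T2 : finType) (e1 : rel T1) (e2 : rel T2) :
  rel (T1 * T2) :=
  fun x y => e1 x.1 y.1 && e2 x.2 y.2.

(* Let D be a maximum independent set of G. It is a maximal independent set, hence
   independent and dominating, and D x V(H) is then independent and dominating in
   G x H (H has no isolated vertex), hence minimal dominating; well-domination gives
   gamma(G x H) = alpha(G) n(H). Conversely a minimum dominating set M of G yields the
   dominating set M x V(H), which contains a minimal, hence minimum, dominating set:
   alpha(G) n(H) <= gamma(G) n(H), so gamma(G) = alpha(G). The same holds with the
   roles of G and H exchanged. *)

From mathcomp Require Import all_boot order.
Set Implicit Arguments. Unset Strict Implicit. Unset Printing Implicit Defensive.
Import Order.TTheory.

Section DominationIndependence.
Variables (T : finType) (e : rel T).

Lemma dominating_setT : dominating e [set: T].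
Proof. by apply/forallP=> v; rewrite in_setT. Qed.

Lemma gamma_le_card D : dominating e D -> gamma e <= #|D|.
Proof. exact: (bigmin_le_cond (T := nat) #|T| (fun D : {set T} => #|D|)). Qed.

Lemma gamma_attained : exists2 D, dominating e D & #|D| = gamma e.
Proof.
have [D domD gammaE] := eq_bigmin (T := nat) (x := #|T|) _ _
  (fun D : {set T} => #|D|) dominating_setT (fun D _ => max_card D).
by exists D => //; exact: esym gammaE.
Qed.

Lemma card_le_alpha S : independent e S -> #|S| <= alpha e.
Proof. exact: (@leq_bigmax_cond _ _ (fun S : {set T} => #|S|)). Qed.

Lemma alpha_attained : exists2 S, independent e S & #|S| = alpha e.
Proof.
have [|S indS alphaE] :=
  eq_bigmax_cond (A := independent e) (fun S : {set T} => #|S|).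
  by apply/card_gt0P; exists set0; apply/forall_inP=> u; rewrite in_set0.
by exists S => //; exact: esym alphaE.
Qed.

Lemma independent_dominating_minimal S :
  independent e S -> dominating e S -> minimal_dominating e S.
Proof.
move=> indS domS; apply/minsetP; split=> // B domB sBS.
apply/eqP; rewrite eqEsubset sBS; apply/subsetP=> x xS; apply/negPn/negP=> xNB.
move/forallP: domB => /(_ x); rewrite (negbTE xNB) => /exists_inP[u uB exu].
by move/forall_inP: indS => /(_ x xS)/forall_inP/(_ u (subsetP sBS u uB)); rewrite exu.
Qed.

Lemma maximum_independent_dominating S : simple_graph e ->
  independent e S -> #|S| = alpha e -> dominating e S.
Proof.
move=> [e_sym e_irr] indS cardS; apply/forallP=> v.
case: (boolP (v \in S)) => //= vNS; apply: contraT => /exists_inP noNb.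
have indvS : independent e (v |: S).
  apply/forall_inP=> x /setU1P xS; apply/forall_inP=> y /setU1P yS.
  case: xS => [->|xS]; case: yS => [->|yS].
  - by rewrite e_irr.
  - by apply/negP=> evy; apply: noNb; exists y.
  - by apply/negP=> exv; apply: noNb; exists x; rewrite // e_sym.
  - by move/forall_inP: indS => /(_ x xS)/forall_inP; apply.
by have := card_le_alpha indvS; rewrite cardsU1 vNS -cardS ltnn.
Qed.

Lemma connected_has_neighbor : connected_graph e -> 1 < #|T| ->
  forall x, exists y, e x y.
Proof.
move=> e_conn T_gt1 x.
have /card_gt0P[y yNx] : 0 < #|predC1 x| by rewrite cardC1 -subn1 subn_gt0.
case/connectP: (e_conn x y) => [[|z p]] /=; first by move=> _ yx; rewrite -yx inE eqxx in yNx.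
by case/andP=> exz _ _; exists z.
Qed.

End DominationIndependence.

Section ProductSets.
Variables (G H : finType) (eG : rel G) (eH : rel H).
Local Notation eGH := (direct_prod eG eH).

Lemma dominating_setXT : (forall h, exists h', eH h h') ->
  forall D, dominating eG D -> dominating eGH (setX D [set: H]).
Proof.
move=> nbH D domD; apply/forallP=> [[g h]]; rewrite !inE /= andbT.
case: (boolP (g \in D)) => //= gND.
move/forallP: domD => /(_ g); rewrite (negbTE gND) => /exists_inP[d dD egd].
have [h' ehh'] := nbH h.
by apply/exists_inP; exists (d, h'); rewrite ?inE ?dD //= /direct_prod /= egd.
Qed.

Lemma dominating_setTX : (forall g, exists g', eG g g') ->
  forall D, dominating eH D -> dominating eGH (setX [set: G] D).
Proof.
move=> nbG D domD; apply/forallP=> [[g h]]; rewrite !inE /=.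
case: (boolP (h \in D)) => //= hND.
move/forallP: domD => /(_ h); rewrite (negbTE hND) => /exists_inP[d dD ehd].
have [g' egg'] := nbG g.
by apply/exists_inP; exists (g', d); rewrite ?inE ?dD //= /direct_prod /= egg'.
Qed.

Lemma independent_setXT D : independent eG D -> independent eGH (setX D [set: H]).
Proof.
move=> /forall_inP indD; apply/forall_inP=> [[g h]]; rewrite !inE andbT => gD.
apply/forall_inP=> [[g' h']]; rewrite !inE andbT => g'D.
by rewrite /direct_prod /= (negbTE (forall_inP (indD g gD) g' g'D)).
Qed.

Lemma independent_setTX D : independent eH D -> independent eGH (setX [set: G] D).
Proof.
move=> /forall_inP indD; apply/forall_inP=> [[g h]]; rewrite !inE => hD.
apply/forall_inP=> [[g' h']]; rewrite !inE => h'D.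
by rewrite /direct_prod /= (negbTE (forall_inP (indD h hD) h' h'D)) andbF.
Qed.

End ProductSets.

Section WellDominatedLift.
Variables (G X : finType) (eG : rel G) (eX : rel X).
Variables (lift : {set G} -> {set X}) (n : nat).
Hypotheses (eG_simple : simple_graph eG) (eX_wd : well_dominated eX) (n_gt0 : 0 < n).
Hypothesis lift_dominating : forall D, dominating eG D -> dominating eX (lift D).
Hypothesis lift_independent : forall D, independent eG D -> independent eX (lift D).
Hypothesis card_lift : forall D, #|lift D| = #|D| * n.

Lemma gamma_lift : gamma eX = alpha eG * n.
Proof.
have [S indS cardS] := alpha_attained eG.
have domS := maximum_independent_dominating eG_simple indS cardS.
have minS := independent_dominating_minimal (lift_independent indS) (lift_dominating domS).
by rewrite -(eX_wd minS) card_lift cardS.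
Qed.

Lemma gamma_eq_alpha : gamma eG = alpha eG.
Proof.
have [S indS cardS] := alpha_attained eG.
have [M domM cardM] := gamma_attained eG.
have [A minA sAM] := minset_exists (lift_dominating domM).
have : alpha eG * n <= gamma eG * n.
  by rewrite -gamma_lift -(eX_wd minA) -cardM -card_lift subset_leq_card.
rewrite leq_pmul2r // => le_alpha_gamma; apply/eqP; rewrite eqn_leq le_alpha_gamma andbT.
by rewrite -cardS gamma_le_card // (maximum_independent_dominating eG_simple indS cardS).
Qed.

End WellDominatedLift.

Theorem lemma10 (G H : finType) (eG : rel G) (eH : rel H) :
  simple_graph eG -> simple_graph eH ->
  connected_graph eG -> connected_graph eH ->
  3 <= #|G| -> 3 <= #|H| ->
  well_dominated (direct_prod eG eH) ->
  [/\ gamma (direct_prod eG eH) = gamma eG * #|H|,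
      gamma eG * #|H| = gamma eH * #|G|,
      gamma eG = alpha eG &
      gamma eH = alpha eH].
Proof.
move=> sG sH cG cH G_ge3 H_ge3 wd.
have nbG := connected_has_neighbor cG (ltnW G_ge3).
have nbH := connected_has_neighbor cH (ltnW H_ge3).
have liftG_card (D : {set G}) : #|setX D [set: H]| = #|D| * #|H| by rewrite cardsX cardsT.
have liftH_card (D : {set H}) : #|setX [set: G] D| = #|D| * #|G| by rewrite cardsX cardsT mulnC.
have H_gt0 : 0 < #|H| by rewrite (leq_trans _ H_ge3).
have G_gt0 : 0 < #|G| by rewrite (leq_trans _ G_ge3).
have gammaGH_G := gamma_lift sG wd (dominating_setXT nbH)
  (@independent_setXT _ _ _ eH) liftG_card.
have gammaGH_H := gamma_lift sH wd (dominating_setTX nbG)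
  (@independent_setTX _ _ eG _) liftH_card.
have gammaG := gamma_eq_alpha sG wd H_gt0 (dominating_setXT nbH)
  (@independent_setXT _ _ _ eH) liftG_card.
have gammaH := gamma_eq_alpha sH wd G_gt0 (dominating_setTX nbG)
  (@independent_setTX _ _ eG _) liftH_card.
by rewrite gammaG gammaH -gammaGH_G -gammaGH_H.
Qed.
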